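(* Let $\mathcal{U}$ be a UFO tree of a tree $F$ (arbitrary degree). For any level $l>0$ of $\mathcal{U}$, the number of level-$l$ clusters is at most $5/6$ times the number of level-$(l-1)$ clusters.
   Context: UFO trees. For a tree $F$ with vertex set $V$: level-$0$ clusters are singletons; level-$i$ clusters partition $V$ into connected pieces; two are adjacent if an edge of $F$ joins them; the degree of a cluster is the number of edges of $F$ with exactly one endpoint in it, and it is high degree if this is at least $3$. Level $i+1$ arises by merging pairwise disjoint groups of level-$i$ clusters, each group being two adjacent clusters of degrees $\{1,1\}$, $\{1,2\}$ or $\{2,2\}$, or a high-degree cluster together with one or more adjacent degree-$1$ clusters, chosen maximally (each high-degree cluster is grouped with all its adjacent degree-$1$ clusters, and the remaining degree-$\le 2$ clusters are paired by a maximal matching of allowed pairs); ungrouped clusters persist. Levels are formed until $F$ is a single cluster (so level $l$ exists only if level $l-1$ has at least two clusters). *)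

From mathcomp Require Import all_boot.
Set Implicit Arguments. Unset Strict Implicit. Unset Printing Implicit Defensive.

Section UFO.
Variables (T : finType) (e : rel T).

Definition is_tree : Prop :=
  symmetric e /\ irreflexive e /\ (forall x y, connect e x y) /\
  (forall (x : T) (p : seq T), path e x p -> uniq (x :: p) -> 2 <= size p ->
     ~~ e (last x p) x).

Definition cluster_connected (C : {set T}) : Prop :=
  forall x y, x \in C -> y \in C ->
    connect [rel u v | e u v && (u \in C) && (v \in C)] x y.

Definition clustering (P : {set {set T}}) : Prop :=
  partition P [set: T] /\ forall C, C \in P -> cluster_connected C.

(* number of edges of F with exactly one endpoint in C
   (each undirected edge counted once, oriented from inside to outside) *)
Definition cdeg (C : {set T}) : nat :=
  #|[set p : T * T | e p.1 p.2 && (p.1 \in C) && (p.2 \notin C)]|.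

Definition cadj (A B : {set T}) : bool :=
  [exists x in A, exists y in B, e x y].

Definition valid_group (g : {set {set T}}) : Prop :=
  #|g| = 1 \/
  (exists A B, g = [set A; B] /\ A != B /\ cadj A B /\
     1 <= cdeg A <= 2 /\ 1 <= cdeg B <= 2) \/
  (exists c, c \in g /\ 3 <= cdeg c /\ 2 <= #|g| /\
     forall d, d \in g -> d != c -> cdeg d = 1 /\ cadj c d).

Definition ufo_step (P Q : {set {set T}}) : Prop :=
  exists G : {set {set {set T}}},
    partition G P /\
    (forall g, g \in G -> valid_group g) /\
    (forall c d, c \in P -> d \in P -> 3 <= cdeg c -> cdeg d = 1 -> cadj c d ->
       pblock G c = pblock G d) /\
    (* the pairing of the remaining degree <= 2 clusters is a maximal matching *)
    (forall A B, A \in P -> B \in P -> A != B -> cadj A B ->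
       1 <= cdeg A <= 2 -> 1 <= cdeg B <= 2 ->
       pblock G A = [set A] -> pblock G B = [set B] -> False) /\
    Q = [set cover g | g in G].

Definition ufo_tree (h : nat) (L : nat -> {set {set T}}) : Prop :=
  L 0 = [set [set x] | x : T] /\
  #|L h| = 1 /\
  (forall i, i <= h -> clustering (L i)) /\
  (forall i, i < h -> 2 <= #|L i| /\ ufo_step (L i) (L i.+1)).

End UFO.

From mathcomp Require Import all_boot zify.
Set Implicit Arguments. Unset Strict Implicit. Unset Printing Implicit Defensive.

(* A pair group saves one cluster and a star group at least one, so it suffices to bound
   the unmerged clusters together with the centres of star groups by twice the paired
   clusters plus five times the leaves of star groups.  Contracting the clusters of a level
   yields a tree, so the degrees sum to [2 * #|P| - 2] and there are at least two more leaves
   than clusters of degree [>= 3].  Maximality of the matching and the absorption of leaves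
   by high clusters force every unmerged cluster of degree [<= 2] to be adjacent only to
   paired or high clusters; a paired cluster has at most one neighbour outside its pair;
   and, as soon as some cluster is high, distinct leaves outside star groups hang off
   distinct pairs.  Double counting the edges between these classes gives linear
   inequalities whose combination is the claimed bound. *)

Lemma cardsU_disjoint (T : finType) (A B : {set T}) :
  [disjoint A & B] -> #|A :|: B| = #|A| + #|B|.
Proof. by move=> AB; apply/eqP; rewrite (leq_card_setU A B).2. Qed.

Lemma leq_card_cover3 (T : finType) (A B C D : {set T}) :
  A \subset B :|: C :|: D -> #|A| <= #|B| + #|C| + #|D|.
Proof.
move/subset_leq_card/leq_trans; apply; apply: leq_trans (leq_card_setU _ _) _.
by rewrite leq_add2r leq_card_setU.
Qed.

Lemma setId_sub (T : finType) (A : {set T}) (p : pred T) : [set x in A | p x] \subset A.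
Proof. by rewrite setIdE subsetIl. Qed.

Section Tree.
Variables (T : finType) (e : rel T).
Hypothesis e_sym : symmetric e.
Hypothesis e_acyclic : forall (x : T) (p : seq T), path e x p -> uniq (x :: p) ->
  2 <= size p -> ~~ e (last x p) x.
Hypothesis e_connected : forall x y, connect e x y.

Lemma cluster_path_sub (C : {set T}) x p :
  path [rel u v | e u v && (u \in C) && (v \in C)] x p -> {subset p <= C}.
Proof.
elim: p x => [|y p IHp] x //= /andP[/andP[/andP[_ _] yC] pC] z.
by rewrite inE => /orP[/eqP->//|]; apply: IHp pC z.
Qed.

Lemma cluster_simple_path (C : {set T}) x y :
  cluster_connected e C -> x \in C -> y \in C ->
  exists p, [/\ path e x p, uniq (x :: p), last x p = y & {subset x :: p <= C}].
Proof.
move=> Cconn xC yC; have /connectP[p pC ->] := Cconn x y xC yC.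
have [p' p'C p'uniq _] := shortenP pC; exists p'; split => //.
  by apply: sub_path p'C => u v /andP[/andP[]].
by move=> z; rewrite inE => /orP[/eqP->//|]; apply: cluster_path_sub p'C z.
Qed.

Lemma cluster_connected_sub (C D : {set T}) x y :
  cluster_connected e C -> C \subset D -> x \in C -> y \in C ->
  connect [rel u v | e u v && (u \in D) && (v \in D)] x y.
Proof.
move=> Cconn /subsetP CD xC yC; apply: connect_sub (Cconn x y xC yC).
by move=> u v /andP[/andP[euv uC] vC]; apply: connect1; rewrite /= euv !CD.
Qed.

Lemma cluster_connectedU (C D : {set T}) a b :
  cluster_connected e C -> cluster_connected e D -> a \in C -> b \in D -> e a b ->
  cluster_connected e (C :|: D).
Proof.
move=> Cconn Dconn aC bD eab.
have CU := subsetUl C D; have DU := subsetUr C D.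
have ab : connect [rel u v | e u v && (u \in C :|: D) && (v \in C :|: D)] a b.
  by apply: connect1; rewrite /= eab !inE aC bD orbT.
have ba : connect [rel u v | e u v && (u \in C :|: D) && (v \in C :|: D)] b a.
  by apply: connect1; rewrite /= e_sym eab !inE aC bD orbT.
move=> x y /setUP[xC|xD] /setUP[yC|yD].
- exact: cluster_connected_sub Cconn CU xC yC.
- apply: connect_trans (cluster_connected_sub Cconn CU xC aC) _.
  exact: connect_trans ab (cluster_connected_sub Dconn DU bD yD).
- apply: connect_trans (cluster_connected_sub Dconn DU xD bD) _.
  exact: connect_trans ba (cluster_connected_sub Cconn CU aC yC).
- exact: cluster_connected_sub Dconn DU xD yD.
Qed.

(* Two such edges would close a cycle through simple paths inside [A] and [B]. *)
Lemma cluster_edge_unique (A B : {set T}) a1 a2 b1 b2 :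
  cluster_connected e A -> cluster_connected e B -> [disjoint A & B] ->
  a1 \in A -> a2 \in A -> b1 \in B -> b2 \in B -> e a1 b1 -> e a2 b2 ->
  a1 = a2 /\ b1 = b2.
Proof.
move=> Aconn Bconn AB a1A a2A b1B b2B e11 e22.
have [p [pe puniq plast pA]] := cluster_simple_path Aconn a1A a2A.
have [q [qe quniq qlast qB]] := cluster_simple_path Bconn b2B b1B.
case: (leqP 2 (size (p ++ b2 :: q))) => [long|].
  have /negP[] : ~~ e (last a1 (p ++ b2 :: q)) a1.
    apply: e_acyclic long; first by rewrite cat_path pe /= plast e22 qe.
    rewrite -cat_cons cat_uniq puniq quniq andbT; apply/hasPn => z zq.
    apply/negP => /pA zA; have zB := qB z zq.
    by rewrite (disjointFl AB zB) in zA.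
  by rewrite last_cat /= qlast e_sym.
case: p pe puniq plast pA => [|? ?] /=; last by rewrite size_cat /= addnS.
case: q qe quniq qlast qB => [|? ?] //= _ _ <- _ _ _ <- _; by [].
Qed.

Section Fibers.
Variable K : finType.
Implicit Type f : T -> K.

Definition fiber f k := [set z | f z == k].
Definition connected_fibers f := forall k, cluster_connected e (fiber f k).
Definition crossing f := [set p : T * T | e p.1 p.2 && (f p.1 != f p.2)].

Section Merge.
Variables (f : T -> K) (a b : T).
Hypotheses (eab : e a b) (fab : f a != f b) (fconn : connected_fibers f).

Definition merge z := if f z == f b then f a else f z.

Lemma fiber_merge k : fiber merge k =
  if k == f a then fiber f (f a) :|: fiber f (f b)
  else if k == f b then set0 else fiber f k.
Proof.
apply/setP => z; rewrite /fiber /merge.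
case: (eqVneq k (f a)) => [-> | ka].
  by rewrite !inE; case: ifP => [/eqP -> | _]; rewrite ?eqxx ?orbT ?orbF.
case: (eqVneq k (f b)) => [-> | kb]; rewrite !inE.
  by case: ifP => [_ | /negbT zb]; apply/negbTE.
by case: ifP => [/eqP -> | //]; rewrite !(eq_sym _ k) (negbTE ka) (negbTE kb).
Qed.

Lemma image_merge : merge @: setT = (f @: setT) :\ f b.
Proof.
apply/setP => k; rewrite !inE; apply/imsetP/andP => [[z _ ->] | [kb /imsetP[z _ kz]]].
  rewrite /merge; case: ifP => [_ | /negbT]; last by split; last exact: imset_f.
  by rewrite fab imset_f.
by exists z => //; move: kb; rewrite kz /merge => /negbTE ->.
Qed.

Lemma merge_connected : connected_fibers merge.
Proof.
move=> k; rewrite fiber_merge; case: eqP => [_ | _].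
  by apply: cluster_connectedU eab; rewrite ?inE.
by case: eqP => // _ x y; rewrite inE.
Qed.

Lemma crossing_merge : crossing f \subset crossing merge :|: [set (a, b); (b, a)].
Proof.
have [Aconn Bconn] := (@fconn (f a), @fconn (f b)).
have ABdisj : [disjoint fiber f (f a) & fiber f (f b)].
  by rewrite disjoints_subset; apply/subsetP => z; rewrite !inE => /eqP ->.
apply/subsetP => -[u v]; rewrite /crossing !inE /= => /andP[euv fuv].
case: (eqVneq (merge u) (merge v)) => [| _]; last by rewrite euv.
rewrite /merge; case: ifP => [/eqP ub | _]; case: ifP => [/eqP vb | _].
- by rewrite ub vb eqxx in fuv.
- move=> va; have [-> ->] : a = v /\ b = u.
    apply: (cluster_edge_unique Aconn Bconn ABdisj _ _ _ _ eab);
    by rewrite ?inE ?va ?ub // e_sym.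
  by rewrite eqxx !orbT.
- move=> ua; have [-> ->] : a = u /\ b = v.
    by apply: (cluster_edge_unique Aconn Bconn ABdisj _ _ _ _ eab euv); rewrite ?inE ?ua ?vb.
  by rewrite eqxx !orbT.
- by move=> fuv'; rewrite fuv' eqxx in fuv.
Qed.

End Merge.

Lemma card_crossing_le f : connected_fibers f ->
  #|crossing f| <= 2 * #|f @: setT| - 2.
Proof.
move: {2}#|f @: setT| (erefl #|f @: setT|) => n.
elim: n f => [|n IHn] f fn fconn; have [-> | [[a b]]] := set_0Vmem (crossing f);
  rewrite ?cards0 // inE /= => /andP[eab fab].
  by move: fn; rewrite (cardsD1 (f a)) imset_f.
have mergen : #|merge f a b @: setT| = n.
  by move: fn; rewrite image_merge // (cardsD1 (f b)) imset_f // add1n => -[].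
have n_gt0 : 0 < n.
  by rewrite -mergen card_gt0; apply/set0Pn; exists (merge f a b a); apply: imset_f.
apply: leq_trans (subset_leq_card (crossing_merge eab fab fconn)) _.
apply: leq_trans (leq_card_setU _ _) _.
have := IHn _ mergen (merge_connected eab fab fconn).
have : #|[set (a, b); (b, a)]| <= 2 by rewrite cards2; case: (_ != _).
lia.
Qed.

End Fibers.

Section Clustering.
Variable P : {set {set T}}.
Hypothesis P_partition : partition P [set: T].
Hypothesis P_connected : forall C, C \in P -> cluster_connected e C.
Hypothesis P_card : 2 <= #|P|.

Implicit Types (X Y : {set {set T}}) (C D : {set T}).
Local Notation cdeg := (cdeg e).
Local Notation cadj := (cadj e).

Definition cluster x := pblock P x.
Definition boundary C := [set p : T * T | e p.1 p.2 && (p.1 \in C) && (p.2 \notin C)].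
Definition neighbours C := [set cluster p.2 | p in boundary C].
Definition neighbour C := odflt C [pick D in neighbours C].

(* Pairs are ordered: an edge between two clusters counts twice in [nedges P P]. *)
Definition edges X Y := [set p : T * T | e p.1 p.2 && (cluster p.1 \in X)
  && (cluster p.2 \in Y) && (cluster p.1 != cluster p.2)].
Definition nedges X Y := #|edges X Y|.

Lemma P_cover : cover P = [set: T]. Proof. by case/and3P: P_partition => /eqP. Qed.

Lemma clusterP x : cluster x \in P.
Proof. by apply: pblock_mem; rewrite P_cover inE. Qed.

Lemma mem_cluster x : x \in cluster x.
Proof. by rewrite mem_pblock P_cover inE. Qed.

Lemma cluster_def C x : C \in P -> x \in C -> cluster x = C.
Proof. by apply: def_pblock; case/and3P: P_partition. Qed.

Lemma eq_cluster x y : (cluster x == cluster y) = (y \in cluster x).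
Proof. by rewrite eq_pblock ?P_cover ?inE //; case/and3P: P_partition. Qed.

Lemma P_neq0 C : C \in P -> exists x, x \in C.
Proof.
move=> CP; have /set0Pn[x xC] : C != set0.
  by apply: contraTneq CP => ->; case/and3P: P_partition.
by exists x.
Qed.

Lemma image_cluster : cluster @: setT = P.
Proof.
apply/setP => C; apply/imsetP/idP => [[x _ ->] | CP]; first exact: clusterP.
by have [x xC] := P_neq0 CP; exists x; rewrite ?(cluster_def CP xC).
Qed.

Lemma neighbours_edge x y :
  e x y -> cluster x != cluster y -> cluster y \in neighbours (cluster x).
Proof.
move=> exy xy; apply/imsetP; exists (x, y) => //.
by rewrite inE /= exy mem_cluster -eq_cluster xy.
Qed.

Lemma neighboursP C D : C \in P -> D \in neighbours C ->
  [/\ D \in P, D != C & exists x y, [/\ e x y, cluster x = C & cluster y = D]].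
Proof.
move=> CP /imsetP[[x y]]; rewrite inE /= => /andP[/andP[exy xC] yC] ->.
split; first exact: clusterP.
  by apply: contraNneq yC => <-; apply: mem_cluster.
by exists x, y; rewrite (cluster_def CP xC).
Qed.

Lemma cadjC C D : cadj C D = cadj D C.
Proof.
by apply/existsP/existsP => -[x /andP[xC /existsP[y /andP[yD exy]]]];
  exists y; rewrite yD /=; apply/existsP; exists x; rewrite xC e_sym.
Qed.

Lemma cadj_neighbours C D : C \in P -> D \in P -> D != C ->
  cadj C D = (D \in neighbours C).
Proof.
move=> CP DP DC; apply/idP/idP => [/existsP[x /andP[xC /existsP[y /andP[yD exy]]]] | ].
  rewrite -(cluster_def CP xC) -(cluster_def DP yD); apply: neighbours_edge => //.
  by rewrite (cluster_def CP xC) (cluster_def DP yD) eq_sym.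
case/(neighboursP CP) => _ _ [x [y [exy <- <-]]].
by apply/existsP; exists x; rewrite mem_cluster; apply/existsP; exists y; rewrite mem_cluster.
Qed.

Lemma neighboursC C D : C \in P -> D \in neighbours C -> C \in neighbours D.
Proof.
move=> CP CD; have [DP DC _] := neighboursP CP CD.
by rewrite -cadj_neighbours // 1?eq_sym // cadjC cadj_neighbours.
Qed.

Lemma card_neighbours_le C : #|neighbours C| <= cdeg C.
Proof. exact: leq_imset_card. Qed.

Lemma closed_neighbours_P (S : {set {set T}}) C0 : S \subset P -> C0 \in S ->
  (forall C, C \in S -> neighbours C \subset S) -> P \subset S.
Proof.
move=> /subsetP SP C0S Sclosed; have [x0 x0C0] := P_neq0 (SP _ C0S).
have Sx y : cluster y \in S.
  have /connectP[p pe ->] := e_connected x0 y.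
  have : cluster x0 \in S by rewrite (cluster_def (SP _ C0S) x0C0).
  elim: p x0 pe {x0C0} => // z p IHp x /= /andP[exz pz] xS; apply: IHp pz _.
  have [<- // | xz] := eqVneq (cluster x) (cluster z).
  exact: subsetP (Sclosed _ xS) _ (neighbours_edge exz xz).
by apply/subsetP => C CP; have [x xC] := P_neq0 CP; rewrite -(cluster_def CP xC).
Qed.

Lemma cdeg_gt0 C : C \in P -> 0 < cdeg C.
Proof.
move=> CP; rewrite lt0n; apply/negP => /eqP deg0.
have : P \subset [set C].
  apply: closed_neighbours_P; rewrite ?sub1set ?inE // => D /set1P ->.
  have : #|neighbours C| <= 0 by rewrite -deg0 card_neighbours_le.
  by rewrite leqn0 cards_eq0 => /eqP ->; rewrite sub0set.
by move/subset_leq_card; rewrite cards1 leqNgt P_card.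
Qed.

Lemma neighbour_mem C D : D \in neighbours C -> neighbour C \in neighbours C.
Proof. by rewrite /neighbour; case: pickP => [D' -> | /(_ D) ->]. Qed.

Lemma neighbourP C : C \in P -> neighbour C \in neighbours C.
Proof.
move=> CP; have := cdeg_gt0 CP; rewrite card_gt0 => /set0Pn[p pC].
exact: (neighbour_mem (imset_f _ pC)).
Qed.

Lemma neighbour_unique C D : cdeg C = 1 -> D \in neighbours C -> D = neighbour C.
Proof.
move=> deg1 CD; have : #|neighbours C| <= 1 by rewrite -deg1 card_neighbours_le.
by move/card_le1_eqP; apply => //; apply: neighbour_mem CD.
Qed.

Lemma nedgesC X Y : nedges X Y = nedges Y X.
Proof.
have swap_inj : injective (fun p : T * T => (p.2, p.1)) by move=> [? ?] [? ?] [-> ->].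
suff le A B : nedges A B <= nedges B A by apply/eqP; rewrite eqn_leq !le.
rewrite /nedges -(card_imset (edges A B) swap_inj); apply/subset_leq_card/subsetP.
move=> _ /imsetP[[u v] + ->].
by rewrite !inE /= e_sym eq_sym => /andP[/andP[/andP[-> ->] ->] ->].
Qed.

Lemma nedgesSr X Y1 Y2 : Y1 \subset Y2 -> nedges X Y1 <= nedges X Y2.
Proof.
move=> /subsetP Y12; apply/subset_leq_card/subsetP => p.
by rewrite !inE => /andP[/andP[/andP[-> ->] /Y12 ->] ->].
Qed.

Lemma nedgesSl X1 X2 Y : X1 \subset X2 -> nedges X1 Y <= nedges X2 Y.
Proof. by rewrite !(nedgesC _ Y); apply: nedgesSr. Qed.

Lemma edgesUr X Y1 Y2 : edges X (Y1 :|: Y2) = edges X Y1 :|: edges X Y2.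
Proof.
apply/setP => p; rewrite !inE.
by case: (e _ _) (cluster p.1 \in X) (cluster p.2 \in Y1) (cluster p.2 \in Y2) (_ != _)
  => [] [] [] [] [].
Qed.

Lemma nedgesUr X Y1 Y2 : nedges X (Y1 :|: Y2) <= nedges X Y1 + nedges X Y2.
Proof. by rewrite /nedges edgesUr leq_card_setU. Qed.

Lemma nedgesUl X1 X2 Y : nedges (X1 :|: X2) Y <= nedges X1 Y + nedges X2 Y.
Proof. by rewrite !(nedgesC _ Y) nedgesUr. Qed.

Lemma nedgesUr_disjoint X Y1 Y2 : [disjoint Y1 & Y2] ->
  nedges X (Y1 :|: Y2) = nedges X Y1 + nedges X Y2.
Proof.
move=> Y12; rewrite /nedges edgesUr cardsU disjoint_setI0 ?cards0 ?subn0 //.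
rewrite disjoints_subset; apply/subsetP => p; rewrite !inE => /andP[/andP[_ pY1] _].
by rewrite (disjointFr Y12 pY1) !andbF.
Qed.

Lemma nedgesUl_disjoint X1 X2 Y : [disjoint X1 & X2] ->
  nedges (X1 :|: X2) Y = nedges X1 Y + nedges X2 Y.
Proof. by move=> X12; rewrite !(nedgesC _ Y) nedgesUr_disjoint. Qed.

Lemma card_le_nedges X Y : X \subset P ->
  (forall C, C \in X -> exists2 D, D \in neighbours C & D \in Y) -> #|X| <= nedges X Y.
Proof.
move=> /subsetP XP XY.
apply: leq_trans (leq_imset_card (fun p : T * T => cluster p.1) _); apply/subset_leq_card/subsetP.
move=> C CX; have [D CD DY] := XY C CX.
have [_ DC [x [y [exy xC yD]]]] := neighboursP (XP _ CX) CD.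
by apply/imsetP; exists (x, y); rewrite // !inE /= exy xC yD CX DY eq_sym DC.
Qed.

Lemma nedges_neighbours X Y : (forall C, C \in X -> neighbours C \subset Y) ->
  nedges X P <= nedges X Y.
Proof.
move=> XY; apply/subset_leq_card/subsetP => p.
rewrite !inE => /andP[/andP[/andP[ep pX] _] p12]; rewrite ep pX p12 andbT.
exact: subsetP (XY _ pX) _ (neighbours_edge ep p12).
Qed.

Lemma nedges_sum_cdeg X : X \subset P -> nedges X P = \sum_(C in X) cdeg C.
Proof.
move=> /subsetP XP; rewrite /nedges -sum1_card.
rewrite (eq_bigr (fun C => \sum_(p in boundary C) 1)) => [|C _]; last by rewrite sum1_card.
rewrite (exchange_big_dep (fun p => p \in edges X P)) /=.
  apply: eq_bigr => p pXP; rewrite (big_pred1 (cluster p.1)) // => C.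
  move: pXP; rewrite !inE => /andP[/andP[/andP[ep pX] _] p12].
  apply/andP/eqP => [[CX /andP[/andP[_ p1C] _]] | ->]; first by rewrite (cluster_def (XP _ CX)).
  by rewrite pX ep mem_cluster -eq_cluster p12.
move=> C p CX; rewrite !inE => /andP[/andP[ep p1C] p2C].
by rewrite ep clusterP eq_cluster (cluster_def (XP _ CX) p1C) CX p2C.
Qed.

Lemma nedges_ge k X : X \subset P -> (forall C, C \in X -> k <= cdeg C) -> k * #|X| <= nedges X P.
Proof. by move=> XP Xk; rewrite nedges_sum_cdeg // mulnC -sum_nat_const leq_sum. Qed.

Lemma nedges_le k X : X \subset P -> (forall C, C \in X -> cdeg C <= k) -> nedges X P <= k * #|X|.
Proof. by move=> XP Xk; rewrite nedges_sum_cdeg // mulnC -sum_nat_const leq_sum. Qed.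

(* Contracting the clusters leaves a tree with [#|P| - 1] edges, each counted twice. *)
Lemma nedgesPP : nedges P P <= 2 * #|P| - 2.
Proof.
have -> : nedges P P = #|crossing cluster|.
  by apply: eq_card => p; rewrite /crossing !inE !clusterP !andbT.
rewrite -[in X in 2 * X]image_cluster; apply: card_crossing_le => k x y.
rewrite !inE => /eqP xk /eqP yk.
have -> : fiber cluster k = cluster x.
  by apply/setP => z; rewrite /fiber inE -xk eq_sym eq_cluster.
by apply: P_connected; rewrite ?clusterP ?mem_cluster // -eq_cluster xk yk.
Qed.

Section Step.
Variable G : {set {set {set T}}}.
Hypothesis G_partition : partition G P.
Hypothesis G_valid : forall g, g \in G -> valid_group e g.
Hypothesis G_absorbs : forall c d, c \in P -> d \in P -> 3 <= cdeg c -> cdeg d = 1 ->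
  cadj c d -> pblock G c = pblock G d.
Hypothesis G_maximal : forall A B, A \in P -> B \in P -> A != B -> cadj A B ->
  1 <= cdeg A <= 2 -> 1 <= cdeg B <= 2 -> pblock G A = [set A] -> pblock G B = [set B] ->
  False.

Definition group_of C := pblock G C.
Definition has_high (g : {set {set T}}) := [exists D in g, 3 <= cdeg D].

Definition unmerged := [set C in P | #|group_of C| == 1].
Definition paired := [set C in P | (#|group_of C| != 1) && ~~ has_high (group_of C)].
Definition starred := [set C in P | (#|group_of C| != 1) && has_high (group_of C)].
Definition singleton_groups := [set g in G | #|g| == 1].
Definition pair_groups := [set g in G | (#|g| != 1) && ~~ has_high g].
Definition star_groups := [set g in G | (#|g| != 1) && has_high g].
Definition leaves := [set C in P | cdeg C == 1].
Definition degree2 := [set C in P | cdeg C == 2].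
Definition highs := [set C in P | 3 <= cdeg C].
Definition nonstar_leaves := (paired :&: leaves) :|: (unmerged :&: leaves).

Lemma G_cover : cover G = P. Proof. by case/and3P: G_partition => /eqP. Qed.

Lemma group_ofP C : C \in P -> group_of C \in G.
Proof. by move=> CP; apply: pblock_mem; rewrite G_cover. Qed.

Lemma mem_group_of C : C \in P -> C \in group_of C.
Proof. by move=> CP; rewrite mem_pblock G_cover. Qed.

Lemma group_of_def g C : g \in G -> C \in g -> group_of C = g.
Proof. by apply: def_pblock; case/and3P: G_partition. Qed.

Lemma group_sub_P g C : g \in G -> C \in g -> C \in P.
Proof. by move=> gG Cg; rewrite -G_cover; apply/bigcupP; exists g. Qed.

Lemma unmerged_group C : C \in unmerged -> group_of C = [set C].
Proof.
rewrite inE => /andP[CP /cards1P[D gD]]; have := mem_group_of CP.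
by rewrite gD inE => /eqP <-.
Qed.

Lemma pair_groupP g : g \in pair_groups -> exists A B,
  [/\ g = [set A; B], A != B, cadj A B, 1 <= cdeg A <= 2 & 1 <= cdeg B <= 2].
Proof.
rewrite inE => /and3P[gG g_n1 g_low].
case: (G_valid gG) => [/eqP | [[A [B [-> [AB [cAB [dA dB]]]]]] | [c [cg [dc _]]]]].
- by rewrite (negbTE g_n1).
- by exists A, B.
- by case/negP: g_low; apply/existsP; exists c; rewrite cg.
Qed.

Lemma paired_group C : C \in paired -> group_of C \in pair_groups.
Proof. by rewrite !inE => /andP[CP ->]; rewrite group_ofP. Qed.

Lemma mem_pair_group g C : g \in pair_groups -> C \in g -> C \in paired.
Proof.
rewrite inE => /andP[gG g_pair] Cg.
by rewrite inE (group_sub_P gG Cg) (group_of_def gG Cg) g_pair.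
Qed.

Lemma paired_cdeg C : C \in paired -> 1 <= cdeg C <= 2.
Proof.
move=> Cpaired; have CP : C \in P by move: Cpaired; rewrite inE => /andP[].
have [A [B [gAB _ _ dA dB]]] := pair_groupP (paired_group Cpaired).
by have := mem_group_of CP; rewrite gAB => /set2P[] ->.
Qed.

Lemma paired_partner C : C \in paired -> exists2 D, D \in paired & D \in neighbours C.
Proof.
move=> Cpaired; have CP : C \in P by move: Cpaired; rewrite inE => /andP[].
have gpair := paired_group Cpaired.
have [A [B [gAB AB cAB _ _]]] := pair_groupP gpair.
have [Ag Bg] : A \in group_of C /\ B \in group_of C by rewrite gAB !inE !eqxx orbT.
have [AP BP] := (group_sub_P (group_ofP CP) Ag, group_sub_P (group_ofP CP) Bg).
have := mem_group_of CP; rewrite gAB => /set2P[] ->.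
  by exists B; rewrite ?(mem_pair_group gpair) // -cadj_neighbours // eq_sym.
by exists A; rewrite ?(mem_pair_group gpair) // -cadj_neighbours // cadjC.
Qed.

Lemma starred_cases C : C \in starred ->
  3 <= cdeg C \/ (cdeg C = 1 /\ exists2 c, c \in highs & c \in neighbours C).
Proof.
rewrite inE => /and3P[CP g_n1 g_high]; have gG := group_ofP CP.
case: (G_valid gG) => [/eqP | [[A [B [gAB [_ [_ [dA dB]]]]]] | [c [cg [dc [_ g_star]]]]]].
- by rewrite (negbTE g_n1).
- case/existsP: g_high => D /andP[]; rewrite gAB => /set2P[] -> high.
    by move: dA; rewrite [cdeg A <= 2]leqNgt high andbF.
  by move: dB; rewrite [cdeg B <= 2]leqNgt high andbF.
- have [-> | Cc] := eqVneq C c; first by left.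
  have [deg1 cC] := g_star C (mem_group_of CP) Cc; right; split => //.
  have cP := group_sub_P gG cg.
  exists c; first by rewrite inE cP dc.
  by rewrite -cadj_neighbours // 1?eq_sym // cadjC.
Qed.

Lemma two_neighbours_cdeg C D1 D2 : D1 \in neighbours C -> D2 \in neighbours C ->
  D1 != D2 -> 2 <= cdeg C.
Proof.
move=> CD1 CD2 D12; apply: leq_trans (card_neighbours_le C).
have : [set D1; D2] \subset neighbours C by rewrite subUset !sub1set CD1 CD2.
by move/subset_leq_card; rewrite cards2 D12.
Qed.

Lemma three_neighbours_cdeg C D1 D2 D3 : D1 \in neighbours C -> D2 \in neighbours C ->
  D3 \in neighbours C -> D1 != D2 -> D1 != D3 -> D2 != D3 -> 3 <= cdeg C.
Proof.
move=> CD1 CD2 CD3 D12 D13 D23; apply: leq_trans (card_neighbours_le C).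
have : D1 |: [set D2; D3] \subset neighbours C by rewrite !subUset !sub1set CD1 CD2 CD3.
by move/subset_leq_card; rewrite cardsU1 cards2 D23 !inE negb_or D12 D13.
Qed.

(* A high neighbour would have absorbed a leaf, and an unmerged neighbour of degree at most 2
   would contradict the maximality of the matching. *)
Lemma unmerged_neighbour C D : C \in unmerged -> cdeg C <= 2 -> D \in neighbours C ->
  D \in paired \/ (D \in highs /\ 2 <= cdeg C).
Proof.
move=> Cunm degC CD; have CP : C \in P by move: Cunm; rewrite inE => /andP[].
have [DP DC _] := neighboursP CP CD; have DC' := neighboursC CP CD.
have cCD : cadj C D by rewrite cadj_neighbours.
have [degC1 degD1] := (cdeg_gt0 CP, cdeg_gt0 DP).
have [Dhigh | degD] := leqP 3 (cdeg D).
  right; split; first by rewrite inE DP Dhigh.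
  rewrite ltnNge; apply/negP => degC_le1.
  have degC_1 : cdeg C = 1 by apply/eqP; rewrite eqn_leq degC_le1 degC1.
  have := G_absorbs DP CP Dhigh degC_1; rewrite cadjC => /(_ cCD).
  rewrite -/(group_of D) -/(group_of C) (unmerged_group Cunm) => gD.
  by move: (mem_group_of DP); rewrite gD inE (negbTE DC).
have [D_unm | D_n1] := boolP (#|group_of D| == 1).
  have Dunm : D \in unmerged by rewrite inE DP D_unm.
  case: (G_maximal CP DP _ cCD _ _ (unmerged_group Cunm) (unmerged_group Dunm)).
  - by rewrite eq_sym.
  - by rewrite degC1 degC.
  - by rewrite degD1 -ltnS.
have [D_high | D_low] := boolP (has_high (group_of D)); last by left; rewrite inE DP D_n1 D_low.
have Dstar : D \in starred by rewrite inE DP D_n1 D_high.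
have [|[degD_1 [c chigh Dc]]] := starred_cases Dstar; first by rewrite leqNgt degD.
have cC : C != c by apply: contraTneq chigh => <-; rewrite inE CP /= -ltnNge ltnS.
by move: (two_neighbours_cdeg DC' Dc cC); rewrite degD_1.
Qed.

Lemma paired_leaf_neighbour C : C \in paired -> cdeg C = 1 -> neighbour C \in paired.
Proof.
move=> Cpaired deg1; have [D Dpaired CD] := paired_partner Cpaired.
by rewrite -(neighbour_unique deg1 CD).
Qed.

Lemma unmerged_leaf_neighbour C : C \in unmerged -> cdeg C = 1 -> neighbour C \in paired.
Proof.
move=> Cunm deg1; have CP : C \in P by move: Cunm; rewrite inE => /andP[].
by case: (unmerged_neighbour Cunm _ (neighbourP CP)) => [| // | [_]]; rewrite deg1.
Qed.

Section PairClosure.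
Variables (g : {set {set T}}) (Za Zb C1 C2 : {set T}).
Hypotheses (g_pair : g \in pair_groups) (gZ : g = [set Za; Zb]).
Hypotheses (Zab : Za != Zb) (Zab_adj : cadj Za Zb).
Hypothesis C12 : C1 != C2.
Hypothesis C12_leaves : forall C, C \in [set C1; C2] ->
  [/\ C \in P, cdeg C = 1 & neighbour C \in g].

Lemma pair_neighbours_closed : neighbours Za \subset g :|: [set C1; C2].
Proof.
apply/subsetP => D ZaD; apply/negPn/negP => DS.
have [Za_g Zb_g] : Za \in g /\ Zb \in g by rewrite gZ !inE !eqxx orbT.
have [/andP[_ degZa] /andP[_ degZb]] := (paired_cdeg (mem_pair_group g_pair Za_g),
                                        paired_cdeg (mem_pair_group g_pair Zb_g)).
have gG : g \in G by move: g_pair; rewrite inE => /andP[].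
have [ZaP ZbP] := (group_sub_P gG Za_g, group_sub_P gG Zb_g).
have ZaZb : Zb \in neighbours Za by rewrite -cadj_neighbours // eq_sym.
have ZbZa := neighboursC ZaP ZaZb.
have DZb : D != Zb by apply: contraNneq DS => ->; rewrite in_setU Zb_g.
have degZa2 := two_neighbours_cdeg ZaD ZaZb DZb.
have C_Zb C : C \in [set C1; C2] -> C = Zb \/ (C \in neighbours Zb /\ C != Za).
  move=> CC; have [CP degC nC] := C12_leaves CC.
  have CnC := neighboursC CP (neighbourP CP).
  have CZa : C != Za by apply: contraTneq degZa2 => <-; rewrite degC.
  rewrite gZ in nC; case/set2P: nC => nC; last by right; rewrite -nC.
  left; apply/eqP; apply: contraTT degZa => CZb; rewrite -ltnNge.
  have DC : D != C by apply: contraNneq DS => ->; rewrite in_setU CC orbT.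
  by rewrite nC in CnC; apply: (three_neighbours_cdeg ZaD ZaZb CnC DZb DC); rewrite eq_sym.
have [C1C C2C] : C1 \in [set C1; C2] /\ C2 \in [set C1; C2] by rewrite !inE !eqxx orbT.
have [[_ deg1 _] [_ deg2 _]] := (C12_leaves C1C, C12_leaves C2C).
case: (C_Zb C1 C1C) (C_Zb C2 C2C) => [C1Zb | [ZbC1 C1Za]] [C2Zb | [ZbC2 C2Za]].
- by move: C12; rewrite C1Zb C2Zb eqxx.
- by move: (two_neighbours_cdeg ZbZa ZbC2); rewrite -C1Zb deg1 eq_sym C2Za => /(_ isT).
- by move: (two_neighbours_cdeg ZbZa ZbC1); rewrite -C2Zb deg2 eq_sym C1Za => /(_ isT).
- have [ZaC1 ZaC2] : Za != C1 /\ Za != C2 by rewrite !(eq_sym Za).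
  by move: (three_neighbours_cdeg ZbZa ZbC1 ZbC2 ZaC1 ZaC2 C12); rewrite leqNgt ltnS degZb.
Qed.

End PairClosure.

Lemma nonstar_leafP C : C \in nonstar_leaves ->
  [/\ C \in P, cdeg C = 1 & neighbour C \in paired].
Proof.
case/setUP => /setIP[C_group]; rewrite inE => /andP[CP /eqP deg1]; split => //.
  exact: paired_leaf_neighbour.
exact: unmerged_leaf_neighbour.
Qed.

(* If two leaves hang off the same pair, the pair and the two leaves form the whole tree, a path. *)
Lemma shared_pair_no_highs C1 C2 : C1 \in nonstar_leaves -> C2 \in nonstar_leaves -> C1 != C2 ->
  group_of (neighbour C1) = group_of (neighbour C2) -> highs = set0.
Proof.
move=> /nonstar_leafP[C1P deg1 n1paired] /nonstar_leafP[C2P deg2 n2paired] C12 n12.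
set g := group_of (neighbour C1).
have gpair : g \in pair_groups by apply: paired_group.
have [A [B [gAB AB cAB _ _]]] := pair_groupP gpair.
have n_g C : C \in [set C1; C2] -> [/\ C \in P, cdeg C = 1 & neighbour C \in g].
  have nP C' : C' \in paired -> C' \in P by rewrite inE => /andP[].
  case/set2P => ->; split => //; first exact: mem_group_of (nP _ n1paired).
  by rewrite /g n12; apply: mem_group_of (nP _ n2paired).
pose S := g :|: [set C1; C2].
have S_closed C : C \in S -> neighbours C \subset S.
  case/setUP => [| C_leaf]; last first.
    have [_ degC nC] := n_g C C_leaf.
    by apply/subsetP => D CD; rewrite (neighbour_unique degC CD) in_setU nC.
  rewrite {1}gAB => /set2P[] ->; first exact: pair_neighbours_closed gAB AB cAB C12 n_g.
  apply: (@pair_neighbours_closed g B A C1 C2 gpair) => //; first by rewrite gAB setUC.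
  - by rewrite eq_sym.
  - by rewrite cadjC.
have SP : S \subset P.
  rewrite !subUset !sub1set C1P C2P !andbT; apply/subsetP => C Cg.
  by apply: group_sub_P Cg; move: gpair; rewrite inE => /andP[].
have C1S : C1 \in S by rewrite in_setU !inE eqxx orbT.
have /subsetP PS := closed_neighbours_P SP C1S S_closed.
apply/setP => C; rewrite !inE; apply/negbTE/negP => /andP[CP degC].
move: degC; case/setUP: (PS C CP) => [Cg | /set2P[] ->]; rewrite ?deg1 ?deg2 //.
move=> deg3; have /andP[_] := paired_cdeg (mem_pair_group gpair Cg).
by rewrite leqNgt deg3.
Qed.

Ltac classes_disjoint :=
  let C := fresh "C" in
  rewrite disjoints_subset; apply/subsetP => C; rewrite !inE;
  case: (C \in P) (#|group_of C| == 1) (has_high (group_of C)) => [] [] [] //=;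
  case: (cdeg C) => [|[|[|?]]].

Lemma card_group_classes :
  #|unmerged| + #|paired| + #|starred :&: highs| + #|starred :&: leaves| <= #|P|.
Proof.
rewrite -!cardsU_disjoint; try by classes_disjoint.
by apply: subset_leq_card; rewrite !subUset !subIset ?setId_sub.
Qed.

Lemma card_unmerged_split :
  #|unmerged| <= #|unmerged :&: highs| + #|unmerged :&: degree2| + #|unmerged :&: leaves|.
Proof.
apply: leq_card_cover3; apply/subsetP => C Cunm.
have CP : C \in P by move: Cunm; rewrite inE => /andP[].
move: Cunm (cdeg_gt0 CP); rewrite !inE CP; case: (_ == 1) => //.
by case: (cdeg C) => [|[|[|?]]].
Qed.

Lemma card_highs_split : #|unmerged :&: highs| + #|starred :&: highs| <= #|highs|.
Proof.
rewrite -cardsU_disjoint; last by classes_disjoint.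
by apply: subset_leq_card; rewrite subUset !subsetIr.
Qed.

Lemma card_leaves_split :
  #|leaves| <= #|unmerged :&: leaves| + #|paired :&: leaves| + #|starred :&: leaves|.
Proof.
apply: leq_card_cover3; apply/subsetP => C; rewrite !inE => /andP[-> ->] /=.
by case: (_ == 1); case: has_high.
Qed.

Lemma card_P_split : #|P| <= #|leaves| + #|degree2| + #|highs|.
Proof.
apply: leq_card_cover3; apply/subsetP => C CP.
by move: (cdeg_gt0 CP); rewrite !inE CP; case: (cdeg C) => [|[|[|?]]].
Qed.

Lemma card_nonstar_leaves : highs != set0 ->
  #|paired :&: leaves| + #|unmerged :&: leaves| <= #|pair_groups|.
Proof.
move=> highs_n0; rewrite -cardsU_disjoint -/nonstar_leaves; last by classes_disjoint.
have inj : {in nonstar_leaves &, injective (fun C => group_of (neighbour C))}.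
  move=> C1 C2 X1 X2 n12; apply/eqP; apply: contraNT highs_n0 => C12.
  by rewrite (shared_pair_no_highs X1 X2 C12 n12).
rewrite -(card_in_imset inj); apply/subset_leq_card/subsetP => _ /imsetP[C CX ->].
by have [_ _ /paired_group] := nonstar_leafP CX.
Qed.

Lemma nedges_degree_split : nedges leaves P + nedges degree2 P + nedges highs P <= nedges P P.
Proof.
rewrite -!nedgesUl_disjoint; try by classes_disjoint.
by apply: nedgesSl; rewrite !subUset !setId_sub.
Qed.

Lemma nedges_degree_bounds :
  [/\ #|leaves| <= nedges leaves P, 2 * #|degree2| <= nedges degree2 P
    & 3 * #|highs| <= nedges highs P].
Proof.
split; first rewrite -[#|leaves|]mul1n; apply: nedges_ge; rewrite ?setId_sub //.
- by move=> C; rewrite inE => /andP[_ /eqP ->].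
- by move=> C; rewrite inE => /andP[_ /eqP ->].
- by move=> C; rewrite inE => /andP[].
Qed.

Lemma nedges_unmerged_degree2 :
  2 * #|unmerged :&: degree2| <= nedges (unmerged :&: degree2) P /\
  nedges (unmerged :&: degree2) P <=
    nedges (unmerged :&: degree2) highs + nedges (unmerged :&: degree2) paired.
Proof.
have U2P : unmerged :&: degree2 \subset P by rewrite subIset ?setId_sub.
split; first by apply: nedges_ge => // C; rewrite !inE => /and3P[_ _ /eqP ->].
apply: leq_trans (nedgesUr _ _ _); apply: nedges_neighbours => C.
move=> /setIP[Cunm]; rewrite inE => /andP[CP /eqP deg2].
have degC : cdeg C <= 2 by rewrite deg2.
apply/subsetP => D CD; rewrite inE.
by case: (unmerged_neighbour Cunm degC CD) => [-> | [-> _]]; rewrite ?orbT.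
Qed.

Lemma nedges_paired_split :
  nedges paired paired + nedges (unmerged :&: degree2) paired
    + nedges (unmerged :&: leaves) paired <= nedges paired P.
Proof.
rewrite -!(nedgesC paired) -!nedgesUr_disjoint; try by classes_disjoint.
by apply: nedgesSr; rewrite !subUset !subIset ?setId_sub.
Qed.

Lemma card_paired_le_nedges : #|paired| <= nedges paired paired.
Proof.
apply: card_le_nedges; first exact: setId_sub.
by move=> C /paired_partner[D]; exists D.
Qed.

Lemma nedges_paired_le : nedges paired P + #|paired :&: leaves| <= 2 * #|paired|.
Proof.
rewrite -(cardsID leaves paired).
have le1 : nedges (paired :&: leaves) P <= 1 * #|paired :&: leaves|.
  apply: nedges_le; first by rewrite subIset ?setId_sub.
  by move=> C; rewrite !inE => /and3P[_ _ /eqP ->].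
have le2 : nedges (paired :\: leaves) P <= 2 * #|paired :\: leaves|.
  apply: nedges_le; first exact: subset_trans (subsetDl _ _) (setId_sub _ _).
  by move=> C /setDP[/paired_cdeg/andP[]].
have leU := nedgesUl (paired :&: leaves) (paired :\: leaves) P; rewrite setID in leU.
apply: leq_trans (leq_add (leq_trans leU (leq_add le1 le2)) (leqnn _)) _.
by rewrite mul1n addnAC addnn -mul2n mulnDr.
Qed.

Lemma card_unmerged_leaves_le : #|unmerged :&: leaves| <= nedges (unmerged :&: leaves) paired.
Proof.
apply: card_le_nedges; first by rewrite subIset ?setId_sub.
move=> C /setIP[Cunm]; rewrite inE => /andP[CP /eqP deg1].
by exists (neighbour C); rewrite ?neighbourP ?unmerged_leaf_neighbour.
Qed.

Lemma nedges_highs_split :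
  nedges (unmerged :&: degree2) highs + nedges (starred :&: leaves) highs <= nedges highs P.
Proof.
rewrite -!(nedgesC highs) -nedgesUr_disjoint; last by classes_disjoint.
by apply: nedgesSr; rewrite subUset !subIset ?setId_sub.
Qed.

Lemma card_starred_leaves_le : #|starred :&: leaves| <= nedges (starred :&: leaves) highs.
Proof.
apply: card_le_nedges; first by rewrite subIset ?setId_sub.
move=> C /setIP[Cstar]; rewrite inE => /andP[_ /eqP deg1].
by case: (starred_cases Cstar) => [| [_ [c chigh Cc]]]; [rewrite deg1 | exists c].
Qed.

Lemma card_groups_split : #|G| <= #|singleton_groups| + #|pair_groups| + #|star_groups|.
Proof.
apply: leq_card_cover3; apply/subsetP => g gG; rewrite !inE gG /=.
by case: (_ == 1); case: has_high.
Qed.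

Lemma card_singleton_groups : #|singleton_groups| <= #|unmerged|.
Proof.
apply: leq_trans (leq_imset_card group_of unmerged); apply/subset_leq_card/subsetP.
move=> g; rewrite inE => /andP[gG /cards1P[C gC]].
have Cg : C \in g by rewrite gC inE.
apply/imsetP; exists C; last by rewrite (group_of_def gG Cg).
by rewrite inE (group_sub_P gG Cg) (group_of_def gG Cg) gC cards1.
Qed.

Lemma card_pair_groups : 2 * #|pair_groups| <= #|paired|.
Proof.
have pair_G : pair_groups \subset G by apply: setId_sub.
have cover_paired : cover pair_groups \subset paired.
  by apply/subsetP => C /bigcupP[g gpair Cg]; apply: mem_pair_group gpair Cg.
apply: leq_trans (subset_leq_card cover_paired).
rewrite -[#|cover _|]sum1_card big_trivIset; last first.
  by apply: trivIsetS pair_G _; case/and3P: G_partition.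
rewrite mulnC -sum_nat_const; apply: leq_sum => g gpair; rewrite sum1_card.
by have [A [B [-> AB _ _ _]]] := pair_groupP gpair; rewrite cards2 AB.
Qed.

Lemma card_star_groups : #|star_groups| <= #|starred :&: highs|.
Proof.
apply: leq_trans (leq_imset_card group_of (starred :&: highs)); apply/subset_leq_card/subsetP.
move=> g; rewrite inE => /and3P[gG g_n1 /[dup] g_high /existsP[C /andP[Cg Chigh]]].
apply/imsetP; exists C; last by rewrite (group_of_def gG Cg).
by rewrite !inE (group_sub_P gG Cg) (group_of_def gG Cg) g_n1 g_high Chigh.
Qed.

Lemma unmerged_starred_le :
  #|unmerged| + #|starred :&: highs| <= 2 * #|paired| + 5 * #|starred :&: leaves|.
Proof.
have := card_group_classes; have := card_unmerged_split; have := card_highs_split.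
have := card_leaves_split; have := card_P_split; have := nedgesPP.
have := nedges_degree_split; have [] := nedges_degree_bounds.
have [] := nedges_unmerged_degree2; have := nedges_paired_split.
have := card_paired_le_nedges; have := nedges_paired_le; have := card_unmerged_leaves_le.
have := nedges_highs_split; have := card_starred_leaves_le; have := card_pair_groups.
have [highs0 | highs_n0] := eqVneq highs set0.
  have : nedges (unmerged :&: degree2) highs = 0.
    rewrite highs0; apply/eqP; rewrite cards_eq0; apply/eqP/setP => p.
    by rewrite !inE andbF andFb.
  lia.
have := card_nonstar_leaves highs_n0.
lia.
Qed.

Lemma card_ufo_step : 6 * #|G| <= 5 * #|P|.
Proof.
have := card_groups_split; have := card_singleton_groups; have := card_pair_groups.
have := card_star_groups; have := card_group_classes; have := unmerged_starred_le.
lia.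
Qed.

End Step.
End Clustering.
End Tree.

Theorem lemmaB17 (T : finType) (e : rel T) (h : nat) (L : nat -> {set {set T}}) :
  is_tree e -> ufo_tree e h L ->
  forall l, 0 < l <= h -> 6 * #|L l| <= 5 * #|L l.-1|.
Proof.
move=> [e_sym [_ [e_connected e_acyclic]]] [_ [_ [L_clustering L_step]]] l /andP[l_gt0 l_le_h].
have l_pred : l.-1 < h by rewrite prednK.
have [P_card [G [G_partition [G_valid [G_absorbs [G_maximal L_l]]]]]] := L_step _ l_pred.
have [P_partition P_connected] := L_clustering _ (ltnW l_pred).
rewrite prednK // in L_l; rewrite L_l.
apply: leq_trans _ (card_ufo_step e_sym e_acyclic e_connected P_partition P_connected
  P_card G_partition G_valid G_absorbs G_maximal).
by rewrite leq_mul2l leq_imset_card orbT.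
Qed.
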